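(* Let $\Delta$, $\Gamma$ be arbitrary contexts, both possibly containing locks, $A$ an arbitrary type, and $t$ a term of type $A$ of $\mathrm{IK}_C$ (or $\mathrm{IS4}_C$) in the concatenated context $\Delta, \Gamma$ that does not mention any variables from $\Delta$. Then there is a term $t'$ of type $A$ in context $\Gamma$ of $\mathrm{IK}_C$ (or $\mathrm{IS4}_C$, respectively).
   Context: Types $A::=\iota\mid A\to B\mid\Box A$; contexts $\Gamma::=\cdot\mid\Gamma,A\mid\Gamma,\mathsf{lock}$ ($\mathsf{lock}$ the context lock); $\Delta,\Gamma$ denotes context concatenation. Both calculi have STLC terms plus $\mathsf{box}\,t:\Box A$ in $\Gamma$ from $t:A$ in $\Gamma,\mathsf{lock}$, and $\mathsf{unbox}(t,e):A$ in $\Gamma$ from $t:\Box A$ in $\Delta$ and $e:\Delta\mathrel{R}\Gamma$, where in $\mathrm{IK}_C$, $\Delta\mathrel{R}\Gamma$ means $\Gamma=\Delta,\mathsf{lock},\Delta'$ with $\Delta'$ lock-free, and in $\mathrm{IS4}_C$ it means $\Gamma$ extends $\Delta$ by any types and locks. Both calculi have normalization functions (via NbE) into $\beta\eta$-normal forms, which do not introduce new free variables. *)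

From Stdlib Require Import Arith.

Inductive ty : Type :=
| iota : ty
| arr : ty -> ty -> ty
| boxT : ty -> ty.

(* Contexts grow to the right:  cext G A  is  "G, A",  clock G  is  "G, lock". *)
Inductive ctx : Type :=
| cnil : ctx
| cext : ctx -> ty -> ctx
| clock : ctx -> ctx.

Fixpoint cconcat (D G : ctx) : ctx :=
  match G with
  | cnil => D
  | cext G' A => cext (cconcat D G') A
  | clock G' => clock (cconcat D G')
  end.

Fixpoint lock_free (G : ctx) : Prop :=
  match G with
  | cnil => True
  | cext G' _ => lock_free G'
  | clock _ => False
  end.

Fixpoint ntypes (G : ctx) : nat :=
  match G with
  | cnil => 0
  | cext G' _ => S (ntypes G')
  | clock G' => ntypes G'
  end.

(* Terms, with de Bruijn variables counting only type entries, from the right.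
   unbox t e carries the context extension e (the suffix added to the context of t). *)
Inductive tm : Type :=
| var : nat -> tm
| lam : tm -> tm
| app : tm -> tm -> tm
| box : tm -> tm
| unbox : tm -> ctx -> tm.

Inductive calculus : Type := IK_C | IS4_C.

(* Admissible extensions e with  G = D, e  for  D R G. *)
Definition ext_ok (c : calculus) (e : ctx) : Prop :=
  match c with
  | IK_C => exists e', e = cconcat (clock cnil) e' /\ lock_free e'
  | IS4_C => True
  end.

(* Variable lookup: x : A in G, with no lock to the right of x. *)
Inductive Var : ctx -> nat -> ty -> Prop :=
| Var_zero : forall G A, Var (cext G A) 0 A
| Var_succ : forall G n A B, Var G n A -> Var (cext G B) (S n) A.

Inductive typed (c : calculus) : ctx -> tm -> ty -> Prop :=
| T_var : forall G n A, Var G n A -> typed c G (var n) A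
| T_lam : forall G t A B, typed c (cext G A) t B -> typed c G (lam t) (arr A B)
| T_app : forall G t u A B, typed c G t (arr A B) -> typed c G u A ->
    typed c G (app t u) B
| T_box : forall G t A, typed c (clock G) t A -> typed c G (box t) (boxT A)
| T_unbox : forall D e t A, typed c D t (boxT A) -> ext_ok c e ->
    typed c (cconcat D e) (unbox t e) A.

(* mentions_from t k : t (in its ambient context) has a free variable whose index
   is >= k, i.e. refers to a type entry lying to the left of the last k type entries. *)
Fixpoint mentions_from (t : tm) (k : nat) : Prop :=
  match t with
  | var n => k <= n
  | lam t' => mentions_from t' (S k)
  | app t1 t2 => mentions_from t1 k \/ mentions_from t2 k
  | box t' => mentions_from t' k
  | unbox t' e => mentions_from t' (k - ntypes e)
  end.

(** Normalisation by evaluation in a Kripke model with one extra world.  Worlds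
    are contexts, ordered by lock-free extension and related modally by
    [Δ R (Δ, e)] for the admissible extensions [e] of the calculus; base types
    mean "inhabited in every lock-free extension", and arrows and boxes are
    interpreted as usual.  To these worlds we add [None], which is a modal
    predecessor of every world and has no other relations.  Interpreting
    [Δ, Γ] at the world [Γ], the variables of [Γ] are reflected as themselves,
    the variables of [Δ] get no meaning at all, and the locks of [Δ] are
    answered by [None].  Soundness for terms not mentioning [Δ] gives a value
    of [A] at [Γ], which reifies to a term in context [Γ]. *)

From Stdlib Require Import Arith Lia.

Lemma cconcat_assoc (D G G' : ctx) :
  cconcat D (cconcat G G') = cconcat (cconcat D G) G'.
Proof. induction G'; simpl; congruence. Qed.

Lemma lock_free_cconcat (G G' : ctx) :
  lock_free G -> lock_free G' -> lock_free (cconcat G G').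
Proof. intros HG; induction G'; simpl; auto. Qed.

Lemma ntypes_cconcat (G G' : ctx) : ntypes (cconcat G G') = ntypes G + ntypes G'.
Proof. induction G'; simpl; lia. Qed.

Lemma ext_ok_cconcat_lock_free (c : calculus) (e G : ctx) :
  ext_ok c e -> lock_free G -> ext_ok c (cconcat e G).
Proof.
  destruct c; simpl; auto.
  intros [e' [-> He']] HG.
  exists (cconcat e' G); split.
  - symmetry; apply cconcat_assoc.
  - apply lock_free_cconcat; auto.
Qed.

Lemma ext_ok_lock (c : calculus) : ext_ok c (clock cnil).
Proof. destruct c; simpl; auto. exists cnil; simpl; auto. Qed.

Lemma Var_cconcat_lock_free (G D : ctx) (A : ty) :
  lock_free D -> Var (cconcat (cext G A) D) (ntypes D) A.
Proof.
  induction D; simpl; intros HD.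
  - constructor.
  - constructor; auto.
  - contradiction.
Qed.

Definition world : Type := option ctx.

Definition wle (w w' : world) : Prop :=
  match w, w' with
  | Some G, Some G' => exists D, G' = cconcat G D /\ lock_free D
  | None, None => True
  | _, _ => False
  end.

Definition wacc (c : calculus) (v w : world) : Prop :=
  match v, w with
  | None, _ => True
  | Some G, Some G' => exists e, G' = cconcat G e /\ ext_ok c e
  | Some _, None => False
  end.

Definition stably_inhabited (c : calculus) (A : ty) (G : ctx) : Prop :=
  forall D, lock_free D -> exists t, typed c (cconcat G D) t A.

Fixpoint interp (c : calculus) (A : ty) (w : world) : Prop :=
  match A with
  | iota => match w with Some G => stably_inhabited c iota G | None => True end
  | arr A B => forall w', wle w w' -> interp c A w' -> interp c B w'
  | boxT A => forall w' w'', wle w w' -> wacc c w' w'' -> interp c A w''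
  end.

(* Only the last [k] variables of the context are interpreted. *)
Fixpoint interp_ctx (c : calculus) (k : nat) (G : ctx) (w : world) : Prop :=
  match G with
  | cnil => True
  | cext G' A => interp_ctx c (pred k) G' w /\ (0 < k -> interp c A w)
  | clock G' => exists v, wacc c v w /\ interp_ctx c k G' v
  end.

Lemma wle_refl (w : world) : wle w w.
Proof. destruct w; simpl; auto. exists cnil; simpl; auto. Qed.

Lemma wle_trans (w1 w2 w3 : world) : wle w1 w2 -> wle w2 w3 -> wle w1 w3.
Proof.
  destruct w1, w2, w3; simpl; try tauto.
  intros [D1 [-> H1]] [D2 [-> H2]].
  exists (cconcat D1 D2); split.
  - symmetry; apply cconcat_assoc.
  - apply lock_free_cconcat; auto.
Qed.

Lemma wle_cext (G : ctx) (A : ty) : wle (Some G) (Some (cext G A)).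
Proof. exists (cext cnil A); simpl; auto. Qed.

Lemma wacc_clock (c : calculus) (G : ctx) : wacc c (Some G) (Some (clock G)).
Proof. exists (clock cnil); split; auto. apply ext_ok_lock. Qed.

Lemma wacc_wle (c : calculus) (v w w' : world) :
  wacc c v w -> wle w w' -> wacc c v w'.
Proof.
  destruct v as [G|], w as [G'|], w' as [G''|]; simpl; try tauto.
  intros [e [-> He]] [D [-> HD]].
  exists (cconcat e D); split.
  - symmetry; apply cconcat_assoc.
  - apply ext_ok_cconcat_lock_free; auto.
Qed.

Lemma wacc_S4_refl (w : world) : wacc IS4_C w w.
Proof. destruct w; simpl; auto. exists cnil; simpl; auto. Qed.

Lemma wacc_S4_trans (w1 w2 w3 : world) :
  wacc IS4_C w1 w2 -> wacc IS4_C w2 w3 -> wacc IS4_C w1 w3.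
Proof.
  destruct w1, w2, w3; simpl; try tauto.
  intros [e1 [-> _]] [e2 [-> _]].
  exists (cconcat e1 e2); split; auto.
  symmetry; apply cconcat_assoc.
Qed.

Lemma interp_mono (c : calculus) (A : ty) (w w' : world) :
  interp c A w -> wle w w' -> interp c A w'.
Proof.
  revert w w'; induction A; simpl; intros w w' HA Hle.
  - destruct w as [G|], w' as [G'|]; simpl in *; try tauto.
    destruct Hle as [D1 [-> H1]]; intros D2 H2.
    rewrite <- cconcat_assoc; apply HA, lock_free_cconcat; auto.
  - intros w'' Hle' HA1; apply HA; auto; eapply wle_trans; eauto.
  - intros w2 w3 Hle' Hacc; apply (HA w2 w3); auto; eapply wle_trans; eauto.
Qed.

Lemma interp_ctx_mono (c : calculus) (k : nat) (G : ctx) (w w' : world) :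
  interp_ctx c k G w -> wle w w' -> interp_ctx c k G w'.
Proof.
  revert k w w'; induction G; simpl; intros k w w' HG Hle; auto.
  - destruct HG as [HG HA]; split; eauto.
    intros Hk; eapply interp_mono; eauto.
  - destruct HG as [v [Hv HG]].
    exists v; split; auto; eapply wacc_wle; eauto.
Qed.

Lemma interp_ctx_0 (c : calculus) (G : ctx) (w : world) : interp_ctx c 0 G w.
Proof.
  revert w; induction G; simpl; intros w; auto.
  - split; auto; lia.
  - exists None; simpl; auto.
Qed.

Lemma interp_ctx_lock_free_suffix (c : calculus) (k : nat) (G e : ctx) (w : world) :
  lock_free e -> interp_ctx c k (cconcat G e) w -> interp_ctx c (k - ntypes e) G w.
Proof.
  revert k; induction e; simpl; intros k He HG.
  - rewrite Nat.sub_0_r; auto.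
  - replace (k - S (ntypes e)) with (pred k - ntypes e) by lia.
    apply IHe; tauto.
  - contradiction.
Qed.

Lemma interp_ctx_S4_suffix (k : nat) (G e : ctx) (w : world) :
  interp_ctx IS4_C k (cconcat G e) w ->
  exists v, wacc IS4_C v w /\ interp_ctx IS4_C (k - ntypes e) G v.
Proof.
  revert k w; induction e; simpl; intros k w HG.
  - exists w; rewrite Nat.sub_0_r; split; auto; apply wacc_S4_refl.
  - replace (k - S (ntypes e)) with (pred k - ntypes e) by lia.
    apply IHe; tauto.
  - destruct HG as [v' [Hv' HG]].
    destruct (IHe _ _ HG) as [v [Hv HG']].
    exists v; split; auto; eapply wacc_S4_trans; eauto.
Qed.

Lemma interp_ctx_ext_ok (c : calculus) (k : nat) (D e : ctx) (w : world) :
  ext_ok c e -> interp_ctx c k (cconcat D e) w ->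
  exists v, wacc c v w /\ interp_ctx c (k - ntypes e) D v.
Proof.
  destruct c; simpl; intros He HDe.
  - destruct He as [e' [-> He']].
    rewrite cconcat_assoc in HDe.
    apply interp_ctx_lock_free_suffix in HDe; auto.
    rewrite ntypes_cconcat; exact HDe.
  - apply interp_ctx_S4_suffix; auto.
Qed.

Lemma Var_sound (c : calculus) (G : ctx) (n : nat) (A : ty) (k : nat) (w : world) :
  Var G n A -> n < k -> interp_ctx c k G w -> interp c A w.
Proof.
  intros HV; revert k; induction HV; simpl; intros k Hk HG.
  - apply HG; lia.
  - apply (IHHV (pred k)); [lia | tauto].
Qed.

Lemma typed_sound (c : calculus) (G : ctx) (t : tm) (A : ty) (k : nat) (w : world) :
  typed c G t A -> interp_ctx c k G w -> ~ mentions_from t k -> interp c A w.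
Proof.
  intros Ht; revert k w; induction Ht; simpl; intros k w HG Hm.
  - apply (Var_sound c G n A k w H); auto; lia.
  - intros w' Hle HA.
    apply (IHHt (S k)); auto; simpl; split; auto.
    eapply interp_ctx_mono; eauto.
  - apply (IHHt1 k w HG (fun h => Hm (or_introl h)) w (wle_refl w)).
    exact (IHHt2 k w HG (fun h => Hm (or_intror h))).
  - intros w' w'' Hle Hacc.
    apply (IHHt k); auto; simpl.
    exists w'; split; auto; eapply interp_ctx_mono; eauto.
  - destruct (interp_ctx_ext_ok _ _ _ _ _ H HG) as [v [Hv HD]].
    exact (IHHt _ _ HD Hm v w (wle_refl v) Hv).
Qed.

Lemma stably_inhabited_var (c : calculus) (G : ctx) (A : ty) :
  stably_inhabited c A (cext G A).
Proof.
  intros D HD; exists (var (ntypes D)).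
  constructor; apply Var_cconcat_lock_free; auto.
Qed.

Lemma reflect_reify (c : calculus) (A : ty) :
  (forall G, stably_inhabited c A G -> interp c A (Some G)) /\
  (forall G, interp c A (Some G) -> exists t, typed c G t A).
Proof.
  induction A as [|A [reflA reifA] B [reflB reifB]|A [reflA reifA]]; split; simpl.
  - auto.
  - intros G HG; destruct (HG cnil I) as [t Ht]; eauto.
  - intros G Hf [G'|] Hle HA; [|contradiction].
    destruct Hle as [D1 [-> HD1]].
    apply reflB; intros D2 HD2.
    destruct (Hf (cconcat D1 D2) (lock_free_cconcat _ _ HD1 HD2)) as [f Hf'].
    assert (HA' : interp c A (Some (cconcat (cconcat G D1) D2))).
    { eapply interp_mono; eauto; exists D2; auto. }
    destruct (reifA _ HA') as [a Ha].
    exists (app f a); rewrite cconcat_assoc in Hf'; econstructor; eauto.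
  - intros G Hf.
    assert (Hx : interp c A (Some (cext G A))).
    { apply reflA, stably_inhabited_var. }
    destruct (reifB _ (Hf (Some (cext G A)) (wle_cext G A) Hx)) as [t Ht].
    exists (lam t); constructor; auto.
  - intros G Hb [G'|] [G''|] Hle Hacc; try contradiction.
    destruct Hle as [D1 [-> HD1]], Hacc as [e [-> He]].
    apply reflA; intros D2 HD2.
    destruct (Hb D1 HD1) as [s Hs].
    exists (unbox s (cconcat e D2)); rewrite <- cconcat_assoc.
    constructor; auto; apply ext_ok_cconcat_lock_free; auto.
  - intros G Hb.
    destruct (reifA _ (Hb (Some G) _ (wle_refl (Some G)) (wacc_clock c G))) as [t Ht].
    exists (box t); constructor; auto.
Qed.

Lemma interp_ctx_id (c : calculus) (D G : ctx) :
  interp_ctx c (ntypes G) (cconcat D G) (Some G).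
Proof.
  induction G; simpl.
  - apply interp_ctx_0.
  - split.
    + eapply interp_ctx_mono; eauto; apply wle_cext.
    + intros _; apply (proj1 (reflect_reify c t)), stably_inhabited_var.
  - exists (Some G); split; auto; apply wacc_clock.
Qed.

Theorem lemma3 (c : calculus) (D G : ctx) (A : ty) (t : tm) :
  typed c (cconcat D G) t A ->
  ~ mentions_from t (ntypes G) ->
  exists t' : tm, typed c G t' A.
Proof.
  intros Ht Hm.
  apply (proj2 (reflect_reify c A)).
  exact (typed_sound c _ _ _ _ _ Ht (interp_ctx_id c D G) Hm).
Qed.
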